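(* Let $R_1,R_2$ be nonaxisymmetric rigid components in $\mathbb{R}^3$ in generic position ($n_r^1,n_r^2>1$), and let $R_3$ be a rod ($n_r^3=1$) distinct from them. Suppose that $R_1$ and $R_2$ intersect in at least two instances, and let $\mathbf p_1,\mathbf p_2$ be points lying in two distinct instances of $R_1\cap R_2$. Suppose also that each of $R_1$ and $R_2$ intersects $R_3$ in exactly one instance, and let $\mathbf p_3\in R_1\cap R_3$ and $\mathbf p_4\in R_2\cap R_3$. Assume that neither $\mathbf p_3$ nor $\mathbf p_4$ is collinear with both $\mathbf p_1$ and $\mathbf p_2$. Then the composite body $R_1\cup R_2\cup R_3$ is rigid.
   Context: A rod is a straight segment in $\mathbb{R}^3$. A rigid component (rigid body) $R_i$ is a set of rods that moves as a single rigid body; $n_r^i$ denotes the number of rods it contains, and a component with $n_r^i=1$ is a rod. A component with $n_r^i>1$ is called nonaxisymmetric and may be planar or nonplanar. The intersection of two distinct components consists of finitely many connected pieces, called instances (contacts). Distinct components share no rod. Positions are generic apart from the stated incidences. A union of components is rigid if it is infinitesimally rigid in the following sense. An infinitesimal motion is admissible if its restriction to each component preserves, to first order, all distances between points of that component, and if points on a common rod remain collinear to first order. The union is rigid if every admissible infinitesimal motion is a Euclidean rigid motion of the whole union. Equivalently, the composite rigidity matrix has a right nullspace of dimension $6$. *)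

From HB Require Import structures.
From mathcomp Require Import all_boot all_order all_algebra.
From mathcomp Require Import all_classical all_reals all_analysis.
Set Implicit Arguments. Unset Strict Implicit. Unset Printing Implicit Defensive.
Import Order.TTheory GRing.Theory Num.Theory.
Import numFieldNormedType.Exports.
Local Open Scope classical_set_scope.
Local Open Scope ring_scope.

Section RodBodies.
Variable R : realType.

Definition pt3 := 'rV[R]_3.

Definition rod := (pt3 * pt3)%type.

Definition proper_rod (r : rod) : bool := r.1 != r.2.

Definition rod_pts (r : rod) : set pt3 :=
  [set x | exists2 s : R, 0 <= s <= 1 & x = r.1 + s *: (r.2 - r.1)].

(** A rigid component is a (finite) list of rods; n_r = size. *)
Definition component := seq rod.

Definition wf_component (C : component) : Prop :=
  [/\ (0 < size C)%N, all proper_rod C &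
      forall i j : nat, (i < size C)%N -> (j < size C)%N -> i <> j ->
        rod_pts (nth (0, 0) C i) <> rod_pts (nth (0, 0) C j)].

Definition comp_pts (C : component) : set pt3 :=
  [set x | exists2 r, r \in C & rod_pts r x].

Definition no_shared_rod (C D : component) : Prop :=
  forall r r', r \in C -> r' \in D -> rod_pts r <> rod_pts r'.

(** [p] and [q] lie in two distinct instances (connected pieces) of the
    intersection of components [C] and [D]. *)
Definition distinct_instances (C D : component) (p q : pt3) : Prop :=
  [/\ (comp_pts C `&` comp_pts D) p, (comp_pts C `&` comp_pts D) q &
      ~ connected_component (comp_pts C `&` comp_pts D) p q].

(** [C] and [D] intersect in exactly one instance, which contains [p]. *)
Definition single_instance (C D : component) (p : pt3) : Prop :=
  (comp_pts C `&` comp_pts D) p /\ connected (comp_pts C `&` comp_pts D).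

Definition collinear (a b c : pt3) : Prop :=
  exists (o d : pt3) (s1 s2 s3 : R),
    [/\ a = o + s1 *: d, b = o + s2 *: d & c = o + s3 *: d].

Definition noncoplanar (p1 p2 p3 p4 : pt3) : Prop :=
  forall a b c : R, a *: (p2 - p1) + b *: (p3 - p1) + c *: (p4 - p1) = 0 ->
    [/\ a = 0, b = 0 & c = 0].

(** Infinitesimal Euclidean motion x |-> x A + t with A skew-symmetric. *)
Definition skew (A : 'M[R]_3) : Prop := A^T = - A.

Definition euclid_vel (A : 'M[R]_3) (t : pt3) (x : pt3) : pt3 :=
  x *m A + t.

Definition admissible (Cs : seq component) (v : pt3 -> pt3) : Prop :=
  forall C, C \in Cs -> exists (A : 'M[R]_3) (t : pt3),
    skew A /\ forall x, comp_pts C x -> v x = euclid_vel A t x.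

Definition union_pts (Cs : seq component) : set pt3 :=
  [set x | exists2 C, C \in Cs & comp_pts C x].

(** The union is (infinitesimally) rigid: every admissible motion is a
    Euclidean infinitesimal motion of the whole union. *)
Definition rigid (Cs : seq component) : Prop :=
  forall v : pt3 -> pt3, admissible Cs v ->
    exists (A : 'M[R]_3) (t : pt3),
      skew A /\ forall x, union_pts Cs x -> v x = euclid_vel A t x.

End RodBodies.

(* The relative motion of R1 and R2 is an infinitesimal Euclidean motion
   x |-> x D + tau with D skew-symmetric; it vanishes at p1 and p2, so
   (p2 - p1) D = 0.  At p3 it equals the relative motion of R3 and R2, which
   fixes p4, so it is orthogonal to p3 - p4; this gives
   (p3 - p1) D (p4 - p1)^T = 0.  The alternating form x D y^T therefore
   vanishes on every pair from the basis p2 - p1, p3 - p1, p4 - p1, whence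
   D = 0 and R1, R2 move as one body.  The rod R3 moves with that body at its
   two distinct points p3 and p4, hence along the whole rod. *)

From Pilot Require Import Defs.
From HB Require Import structures.
From mathcomp Require Import all_boot all_order all_algebra.
From mathcomp Require Import all_classical all_reals all_analysis.
Set Implicit Arguments.
Unset Strict Implicit.
Unset Printing Implicit Defensive.
Import Order.TTheory GRing.Theory Num.Theory.
Local Open Scope classical_set_scope.
Local Open Scope ring_scope.

Lemma trmx11 (R : nmodType) (A : 'M[R]_1) : A^T = A.
Proof. by rewrite [A]mx11_scalar tr_scalar_mx. Qed.

Section SkewForm.
Variables (R : numFieldType) (n : nat) (D : 'M[R]_n).
Hypothesis skD : D^T = - D.

Lemma skew_formC (x y : 'rV[R]_n) : y *m D *m x^T = - (x *m D *m y^T).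
Proof.
by rewrite -[RHS]trmx11 linearN /= !trmx_mul trmxK skD mulNmx mulmxN opprK mulmxA.
Qed.

Lemma skew_form_diag (x : 'rV[R]_n) : x *m D *m x^T = 0.
Proof.
apply/eqP; have /eqP := skew_formC x x.
by rewrite -addr_eq0 -mulr2n -scaler_nat scalemx_eq0 pnatr_eq0.
Qed.

End SkewForm.

Lemma col_mx3_unitmx (R : fieldType) (u q w : 'rV[R]_3) :
  (forall a b c : R, a *: u + b *: q + c *: w = 0 -> [/\ a = 0, b = 0 & c = 0]) ->
  col_mx u (col_mx q w) \in unitmx.
Proof.
move=> indep; rewrite -row_free_unit; apply: inj_row_free => v.
rewrite -[v](@hsubmxK _ 1 1 2) -[rsubmx _](@hsubmxK _ 1 1 1).
set a := lsubmx v; set b := lsubmx _; set c := rsubmx _.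
rewrite !mul_row_col [a]mx11_scalar [b]mx11_scalar [c]mx11_scalar !mul_scalar_mx addrA.
by case/indep=> -> -> ->; rewrite !raddf0 !row_mx0.
Qed.

Lemma skew_eq0_col_mx3 (R : numFieldType) (D : 'M[R]_3) (u q w : 'rV[R]_3) :
  D^T = - D -> col_mx u (col_mx q w) \in unitmx ->
  u *m D = 0 -> q *m D *m w^T = 0 -> D = 0.
Proof.
move=> skD Pu uD qDw; set P := col_mx u (col_mx q w) in Pu.
have : P *m D *m P^T = 0.
  have fu (x : 'rV_3) : x *m D *m u^T = 0 by rewrite (skew_formC skD) uD mul0mx oppr0.
  rewrite !mul_col_mx !tr_col_mx !mul_mx_row uD !mul0mx.
  rewrite !fu (skew_formC skD q w) qDw oppr0 !(skew_form_diag skD).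
  by rewrite !row_mx0 !col_mx0.
rewrite -mulmxA => /(congr1 (mulmx (invmx P))).
rewrite mulKmx // mulmx0 => /(congr1 (mulmx^~ (invmx P^T))).
by rewrite mulmxK ?unitmx_tr // mul0mx.
Qed.

Lemma scaler_line_eq0 (F : fieldType) (V : lmodType F) (a b : V) (s1 s2 : F) :
  s1 != s2 -> a + s1 *: b = 0 -> a + s2 *: b = 0 -> forall s, a + s *: b = 0.
Proof.
move=> s12 e1 e2 s.
have : (a + s1 *: b) - (a + s2 *: b) = (s1 - s2) *: b.
  by rewrite opprD addrACA subrr add0r scalerBl.
rewrite e1 e2 subrr => /esym/eqP; rewrite scaler_eq0 subr_eq0 (negbTE s12) /= => /eqP b0.
by move: e1; rewrite b0 !scaler0.
Qed.

Section Motions.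
Variable R : realType.
(* Plain [skew] would denote the notation of mathcomp's sesquilinear.v. *)
Implicit Types (A B : 'M[R]_3) (t s p x : pt3 R).

Lemma skewB A B : Defs.skew A -> Defs.skew B -> Defs.skew (A - B).
Proof. by move=> eA eB; rewrite /Defs.skew [LHS]raddfB /= eA eB opprD. Qed.

Lemma euclid_velB A B t s x :
  euclid_vel A t x - euclid_vel B s x = euclid_vel (A - B) (t - s) x.
Proof. by rewrite /euclid_vel mulmxBr opprD addrACA. Qed.

Lemma euclid_vel_sub A t x p :
  euclid_vel A t x - euclid_vel A t p = (x - p) *m A.
Proof. by rewrite /euclid_vel opprD addrACA subrr addr0 mulmxBl. Qed.

Lemma euclid_vel_fix A B t s p x :
  euclid_vel A t p = euclid_vel B s p ->
  euclid_vel A t x - euclid_vel B s x = (x - p) *m (A - B).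
Proof.
move=> e; have ep : euclid_vel A t p - euclid_vel B s p = 0 by rewrite e subrr.
by rewrite -[LHS]subr0 -ep !euclid_velB euclid_vel_sub.
Qed.

Lemma euclid_vel_fix_orth A B t s p x : Defs.skew A -> Defs.skew B ->
  euclid_vel A t p = euclid_vel B s p ->
  (euclid_vel A t x - euclid_vel B s x) *m (x - p)^T = 0.
Proof. by move=> skA skB /euclid_vel_fix->; rewrite skew_form_diag ?skewB. Qed.

Lemma noncoplanar_neq (p1 p2 p3 p4 : pt3 R) :
  noncoplanar p1 p2 p3 p4 -> p3 != p4.
Proof.
move=> nc; apply/eqP => e34.
have /nc[_ /eqP] : 0 *: (p2 - p1) + 1 *: (p3 - p1) + (-1) *: (p4 - p1) = 0.
  by rewrite e34 scale0r add0r scale1r scaleN1r subrr.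
by rewrite oner_eq0.
Qed.

Lemma euclid_vel_eq_noncoplanar (A1 A2 A3 : 'M[R]_3) (t1 t2 t3 p1 p2 p3 p4 : pt3 R) :
  Defs.skew A1 -> Defs.skew A2 -> Defs.skew A3 ->
  euclid_vel A1 t1 p1 = euclid_vel A2 t2 p1 ->
  euclid_vel A1 t1 p2 = euclid_vel A2 t2 p2 ->
  euclid_vel A1 t1 p3 = euclid_vel A3 t3 p3 ->
  euclid_vel A2 t2 p4 = euclid_vel A3 t3 p4 ->
  noncoplanar p1 p2 p3 p4 -> A1 = A2 /\ t1 = t2.
Proof.
move=> sk1 sk2 sk3 e1 e2 e3 e4 nc.
have skD : (A1 - A2)^T = - (A1 - A2) by exact: skewB.
have uD : (p2 - p1) *m (A1 - A2) = 0 by rewrite -(euclid_vel_fix _ e1) e2 subrr.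
have orth : (p3 - p1) *m (A1 - A2) *m (p3 - p4)^T = 0.
  by rewrite -(euclid_vel_fix _ e1) e3 -opprB mulNmx euclid_vel_fix_orth ?oppr0.
have qDw : (p3 - p1) *m (A1 - A2) *m (p4 - p1)^T = 0.
  have -> : p4 - p1 = (p3 - p1) - (p3 - p4) by rewrite opprB [RHS]addrC addrA subrK.
  by rewrite [(_ - _)^T]raddfB /= mulmxBr skew_form_diag // orth subrr.
have /eqP : A1 - A2 = 0 by exact: skew_eq0_col_mx3 skD (col_mx3_unitmx nc) uD qDw.
rewrite subr_eq0 => /eqP eA; split=> //.
by move: e1; rewrite /euclid_vel eA => /addrI.
Qed.

Lemma euclid_vel_eq_rod A B t s (r : rod R) (p q : pt3 R) :
  p != q -> rod_pts r p -> rod_pts r q ->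
  euclid_vel A t p = euclid_vel B s p -> euclid_vel A t q = euclid_vel B s q ->
  forall x, rod_pts r x -> euclid_vel A t x = euclid_vel B s x.
Proof.
move=> pq [sp _ dp] [sq _ dq] ep eq' x [sx _ ->]; subst p q.
have on_rod u : euclid_vel (A - B) (t - s) (r.1 + u *: (r.2 - r.1)) =
    euclid_vel (A - B) (t - s) r.1 + u *: ((r.2 - r.1) *m (A - B)).
  by rewrite /euclid_vel mulmxDl -scalemxAl addrAC.
apply/eqP; rewrite -subr_eq0 euclid_velB on_rod; apply/eqP.
apply: (@scaler_line_eq0 _ _ _ _ sp sq).
- by apply: contraNneq pq => ->.
- by rewrite -on_rod -euclid_velB ep subrr.
- by rewrite -on_rod -euclid_velB eq' subrr.
Qed.

End Motions.

Lemma comp_pts1 (R : realType) (r : rod R) : comp_pts [:: r] = rod_pts r.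
Proof.
apply/seteqP; split=> x; first by case=> r'; rewrite inE => /eqP->.
by exists r; rewrite ?mem_head.
Qed.

Theorem mainTheorem2 (R : realType) (R1 R2 R3 : component R)
    (p1 p2 p3 p4 : pt3 R) :
  wf_component R1 -> wf_component R2 -> wf_component R3 ->
  (1 < size R1)%N -> (1 < size R2)%N -> size R3 = 1%N ->
  no_shared_rod R1 R2 -> no_shared_rod R1 R3 -> no_shared_rod R2 R3 ->
  distinct_instances R1 R2 p1 p2 ->
  single_instance R1 R3 p3 ->
  single_instance R2 R3 p4 ->
  ~ collinear p3 p1 p2 -> ~ collinear p4 p1 p2 ->
  noncoplanar p1 p2 p3 p4 ->
  rigid [:: R1; R2; R3].
Proof.
move=> _ _ _ _ _ size_R3 _ _ _ [[p1R1 p1R2] [p2R1 p2R2] _] [[p3R1 p3R3] _]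
  [[p4R2 p4R3] _] _ _ nc v adm.
have [r R3E] : exists r, R3 = [:: r].
  by move: size_R3; case: (R3) => [|r []] // _; exists r.
subst R3.
have /adm [A1 [t1 [sk1 v1]]] : R1 \in [:: R1; R2; [:: r]] by rewrite inE eqxx.
have /adm [A2 [t2 [sk2 v2]]] : R2 \in [:: R1; R2; [:: r]] by rewrite !inE eqxx orbT.
have /adm [A3 [t3 [sk3 v3]]] : [:: r] \in [:: R1; R2; [:: r]] by rewrite !inE eqxx !orbT.
rewrite comp_pts1 in p3R3 p4R3 v3.
have e1 : euclid_vel A1 t1 p1 = euclid_vel A2 t2 p1 by rewrite -v1 // -v2.
have e2 : euclid_vel A1 t1 p2 = euclid_vel A2 t2 p2 by rewrite -v1 // -v2.
have e3 : euclid_vel A1 t1 p3 = euclid_vel A3 t3 p3 by rewrite -v1 // -v3.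
have e4 : euclid_vel A2 t2 p4 = euclid_vel A3 t3 p4 by rewrite -v2 // -v3.
have [eA et] := euclid_vel_eq_noncoplanar sk1 sk2 sk3 e1 e2 e3 e4 nc.
subst A2 t2.
exists A1, t1; split=> // x [C]; rewrite !inE => /or3P [] /eqP -> Cx.
- exact: v1.
- exact: v2.
- rewrite comp_pts1 in Cx; rewrite v3 //; symmetry.
  exact: (euclid_vel_eq_rod (noncoplanar_neq nc) p3R3 p4R3 e3 e4).
Qed.
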